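(* Let $R$ be a ring and $S$ an $R$-module. The following are equivalent: (i) $S$ is an intersection flat $R$-module; (ii) for every finitely generated $R$-module $M$, property $(\#)$ holds for every family of submodules of $M$; (iii) for every finitely generated free $R$-module $M$, property $(\#)$ holds for every family of submodules of $M$; (iv) for every finitely generated $R$-module $M$ and every family $\{M_\lambda\}_{\lambda \in\Lambda}$ of submodules with $\bigcap_\lambda M_\lambda = 0$, we have $\bigcap_\lambda (S \otimes_R M_\lambda) = 0$ in $S \otimes_R M$.
   Context: All rings are commutative with identity. For an $R$-module $S$, an $R$-module $M$ and a family $\{M_\lambda\}_{\lambda\in\Lambda}$ of submodules of $M$, property $(\#)$ is the equality $S \otimes_R \left(\bigcap_\lambda M_\lambda\right) = \bigcap_\lambda (S \otimes_R M_\lambda)$, where all modules are identified with their images in $S \otimes_R M$. An $R$-module $S$ is intersection flat if $S$ is flat over $R$ and property $(\#)$ holds for every finitely generated $R$-module $M$ and every family of submodules of $M$. Note that (ii)–(iv) do not assume flatness. *)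

From HB Require Import structures.
From mathcomp Require Import all_boot all_order all_algebra.
Set Implicit Arguments. Unset Strict Implicit. Unset Printing Implicit Defensive.
Import GRing.Theory.
Local Open Scope ring_scope.

Section TensorDefs.
Variable R : comPzRingType.

Definition bilinear_map (S M P : lmodType R) (b : S -> M -> P) : Prop :=
  [/\ forall s1 s2 m, b (s1 + s2) m = b s1 m + b s2 m,
      forall s m1 m2, b s (m1 + m2) = b s m1 + b s m2,
      forall (r : R) s m, b (r *: s) m = r *: b s m
    & forall (r : R) s m, b s (r *: m) = r *: b s m].

(* A formal expression sum_i s_i (x) m_i, denoting an element of S (x)_R M. *)
Definition tensor_expr (S M : lmodType R) := seq (S * M).

(* Equality in S (x)_R M, via the universal property of the tensor product:
   two expressions denote the same element iff every R-bilinear map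
   S x M -> P agrees on them. *)
Definition tensor_eq (S M : lmodType R) (t1 t2 : tensor_expr S M) : Prop :=
  forall (P : lmodType R) (b : S -> M -> P), bilinear_map b ->
    \sum_(x <- t1) b x.1 x.2 = \sum_(x <- t2) b x.1 x.2.

Definition tensor_zero (S M : lmodType R) (t : tensor_expr S M) : Prop :=
  tensor_eq t [::].

(* t lies in the image of S (x)_R N in S (x)_R M (N a subset of M). *)
Definition in_tensor_image (S M : lmodType R) (N : M -> Prop)
    (t : tensor_expr S M) : Prop :=
  exists t' : tensor_expr S M, (forall x, x \in t' -> N x.2) /\ tensor_eq t t'.

Definition is_submodule (M : lmodType R) (N : M -> Prop) : Prop :=
  N 0 /\ forall (a : R) u v, N u -> N v -> N (a *: u + v).

Definition fin_gen (M : lmodType R) : Prop :=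
  exists (n : nat) (g : 'I_n -> M),
    forall m : M, exists c : 'I_n -> R, m = \sum_(i < n) c i *: g i.

Definition fin_gen_free (M : lmodType R) : Prop :=
  exists (n : nat) (e : 'I_n -> M),
    forall m : M, exists! c : {ffun 'I_n -> R}, m = \sum_(i < n) c i *: e i.

Definition prop_sharp (S M : lmodType R) (L : Type) (Ml : L -> M -> Prop)
  : Prop :=
  forall t : tensor_expr S M,
    in_tensor_image (fun m => forall l, Ml l m) t <->
    (forall l, in_tensor_image (Ml l) t).

Definition flat_module (S : lmodType R) : Prop :=
  forall (N M : lmodType R) (f : {linear N -> M}), injective f ->
    forall t : tensor_expr S N,
      tensor_zero (map (fun x => (x.1, f x.2)) t) -> tensor_zero t.

Definition intersection_flat (S : lmodType R) : Prop :=
  flat_module S /\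
  forall (M : lmodType R), fin_gen M ->
    forall (L : Type) (Ml : L -> M -> Prop),
      (forall l, is_submodule (Ml l)) -> prop_sharp S Ml.

End TensorDefs.

(* Tensor products are not constructed: S (x) M is known only through its universal
   property, and an equation in it is transported by mapping formal expressions
   into the quotient of the expressions by a suitable congruence.
   (iii) -> (iv): write M as a quotient of a finitely generated free module F, pull
   the M_l back to F, apply (#) there and use the right exactness of S (x) -.
   (iv) -> (#): in M / (meet of the M_l) the images of the M_l meet in 0, so the
   image of t vanishes there, and right exactness puts t in S (x) (meet of the M_l).
   (iv) -> flatness: let f : N -> M be injective and t = sum s_i (x) n_i with
   f t = 0; this already holds in S (x) M0 for a finitely generated M0 <= M.  In the
   finitely generated submodule X of M x N spanned by M0 x 0 and the (0, n_i), the
   graph of f and 0 x N meet in 0, and sum s_i (x) (f n_i, n_i) lies in the images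
   of both, since (f n_i, n_i) = (f n_i, 0) + (0, n_i).  So it vanishes, and its
   projection to N is t. *)

From HB Require Import structures.
From mathcomp Require Import all_boot all_order all_algebra.
From mathcomp Require Import boolp.
Set Implicit Arguments. Unset Strict Implicit. Unset Printing Implicit Defensive.
Import GRing.Theory.
Local Open Scope ring_scope.

Section LinearFacts.
Variables (R : comPzRingType) (M N : lmodType R) (f : M -> N).
Hypothesis f_lin : linear f.

Lemma linearfB x y : f (x - y) = f x - f y.
Proof. exact: (zmod_morphism_linear f_lin). Qed.
Lemma linearf0 : f 0 = 0.
Proof. by rewrite -(subrr 0) linearfB subrr. Qed.
Lemma linearfD x y : f (x + y) = f x + f y.
Proof. exact: (GRing.semilinear_linear f_lin).2. Qed.
Lemma linearfZ a x : f (a *: x) = a *: f x.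
Proof. exact: (GRing.scalable_linear f_lin). Qed.

Lemma linearf_sum n (c : 'I_n -> R) (g : 'I_n -> M) :
  f (\sum_(i < n) c i *: g i) = \sum_(i < n) c i *: f (g i).
Proof. by elim/big_rec2: _ => [|i y1 y2 _ <-]; [exact: linearf0|rewrite f_lin]. Qed.

End LinearFacts.

Record setoidMod (R : comPzRingType) := SetoidMod {
  sm_car : Type;
  sm_eqv : sm_car -> sm_car -> Prop;
  sm_add : sm_car -> sm_car -> sm_car;
  sm_zero : sm_car;
  sm_opp : sm_car -> sm_car;
  sm_scale : R -> sm_car -> sm_car;
  sm_refl : forall x, sm_eqv x x;
  sm_sym : forall x y, sm_eqv x y -> sm_eqv y x;
  sm_trans : forall x y z, sm_eqv x y -> sm_eqv y z -> sm_eqv x z;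
  sm_addE : forall x x' y y', sm_eqv x x' -> sm_eqv y y' ->
    sm_eqv (sm_add x y) (sm_add x' y');
  sm_oppE : forall x x', sm_eqv x x' -> sm_eqv (sm_opp x) (sm_opp x');
  sm_scaleE : forall r x x', sm_eqv x x' -> sm_eqv (sm_scale r x) (sm_scale r x');
  sm_addA : forall x y z, sm_eqv (sm_add x (sm_add y z)) (sm_add (sm_add x y) z);
  sm_addC : forall x y, sm_eqv (sm_add x y) (sm_add y x);
  sm_add0 : forall x, sm_eqv (sm_add sm_zero x) x;
  sm_addN : forall x, sm_eqv (sm_add (sm_opp x) x) sm_zero;
  sm_scaleA : forall a b x, sm_eqv (sm_scale a (sm_scale b x)) (sm_scale (a * b) x);
  sm_scale1 : forall x, sm_eqv (sm_scale 1 x) x;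
  sm_scaleDr : forall a x y,
    sm_eqv (sm_scale a (sm_add x y)) (sm_add (sm_scale a x) (sm_scale a y));
  sm_scaleDl : forall a b x,
    sm_eqv (sm_scale (a + b) x) (sm_add (sm_scale a x) (sm_scale b x))
}.

Section SetoidQuotient.
Variables (R : comPzRingType) (st : setoidMod R).
Local Notation E := (@sm_eqv R st).

Definition setoid_quot := {C : sm_car st -> Prop | exists x, C = E x}.
HB.instance Definition _ := gen_eqMixin setoid_quot.
HB.instance Definition _ := gen_choiceMixin setoid_quot.

Definition qclass (x : sm_car st) : setoid_quot := exist _ (E x) (ex_intro _ x erefl).

Lemma qclassP x y : qclass x = qclass y <-> E x y.
Proof.
split=> [h|h].
  have := congr1 (@proj1_sig _ _) h => /= ->; exact: sm_refl.
apply: eq_exist; apply: funext => z; apply: propext; split => hz.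
  exact: sm_trans (sm_sym h) hz.
exact: sm_trans h hz.
Qed.

Definition qrepr (q : setoid_quot) : sm_car st := projT1 (cid (proj2_sig q)).

Lemma qreprK q : qclass (qrepr q) = q.
Proof. by rewrite /qrepr; case: cid => x /= hx; case: q hx => C pf /= hx; apply: eq_exist. Qed.

Lemma qclass_surj (q : setoid_quot) : exists x, q = qclass x.
Proof. by exists (qrepr q); rewrite qreprK. Qed.

Lemma qreprE x : E (qrepr (qclass x)) x.
Proof. by apply/qclassP; rewrite qreprK. Qed.

Definition qadd p q := qclass (sm_add (qrepr p) (qrepr q)).
Definition qopp q := qclass (sm_opp (qrepr q)).
Definition qscale r q := qclass (sm_scale r (qrepr q)).

Lemma qaddE x y : qadd (qclass x) (qclass y) = qclass (sm_add x y).
Proof. by apply/qclassP; apply: sm_addE; apply: qreprE. Qed.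
Lemma qoppE x : qopp (qclass x) = qclass (sm_opp x).
Proof. by apply/qclassP; apply: sm_oppE; apply: qreprE. Qed.
Lemma qscaleE r x : qscale r (qclass x) = qclass (sm_scale r x).
Proof. by apply/qclassP; apply: sm_scaleE; apply: qreprE. Qed.

Fact qaddA : associative qadd.
Proof.
move=> p q r; case: (qclass_surj p) (qclass_surj q) (qclass_surj r) => x -> [y ->] [z ->].
by rewrite !qaddE; apply/qclassP; apply: sm_addA.
Qed.
Fact qaddC : commutative qadd.
Proof.
move=> p q; case: (qclass_surj p) (qclass_surj q) => x -> [y ->].
by rewrite !qaddE; apply/qclassP; apply: sm_addC.
Qed.
Fact qadd0 : left_id (qclass (sm_zero st)) qadd.
Proof. by move=> p; case: (qclass_surj p) => x ->; rewrite qaddE; apply/qclassP; apply: sm_add0. Qed.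
Fact qaddN : left_inverse (qclass (sm_zero st)) qopp qadd.
Proof.
move=> p; case: (qclass_surj p) => x ->.
by rewrite qoppE qaddE; apply/qclassP; apply: sm_addN.
Qed.

HB.instance Definition _ := GRing.isZmodule.Build setoid_quot qaddA qaddC qadd0 qaddN.

Fact qscaleA a b q : qscale a (qscale b q) = qscale (a * b) q.
Proof. by case: (qclass_surj q) => x ->; rewrite !qscaleE; apply/qclassP; apply: sm_scaleA. Qed.
Fact qscale1 : left_id 1 qscale.
Proof. by move=> q; case: (qclass_surj q) => x ->; rewrite qscaleE; apply/qclassP; apply: sm_scale1. Qed.
Fact qscaleDr : right_distributive qscale qadd.
Proof.
move=> a p q; case: (qclass_surj p) (qclass_surj q) => x -> [y ->].
by rewrite qaddE !qscaleE qaddE; apply/qclassP; apply: sm_scaleDr.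
Qed.
Fact qscaleDl q : {morph qscale^~ q : a b / a + b >-> qadd a b}.
Proof.
move=> a b; case: (qclass_surj q) => x ->.
by rewrite !qscaleE qaddE; apply/qclassP; apply: sm_scaleDl.
Qed.

HB.instance Definition _ :=
  GRing.Zmodule_isLmodule.Build R setoid_quot qscaleA qscale1 qscaleDr qscaleDl.

Lemma qclassD x y : qclass (sm_add x y) = qclass x + qclass y.
Proof. by rewrite -[RHS]/(qadd _ _) qaddE. Qed.
Lemma qclassZ r x : qclass (sm_scale r x) = r *: qclass x.
Proof. by rewrite -[RHS]/(qscale _ _) qscaleE. Qed.

End SetoidQuotient.

Notation teval b t := (\sum_(x <- t) b x.1 x.2).

Section TensorExpressions.
Variables (R : comPzRingType) (S M : lmodType R).
Implicit Types (t u v w : tensor_expr S M) (D : M -> Prop).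

Definition topp t : tensor_expr S M := map (fun x => (- x.1, x.2)) t.
Definition tscale (r : R) t : tensor_expr S M := map (fun x => (r *: x.1, x.2)) t.
Definition expr_in D t := forall x, x \in t -> D x.2.

Definition bilinear_on D (P : lmodType R) (b : S -> M -> P) : Prop :=
  [/\ forall s1 s2 m, D m -> b (s1 + s2) m = b s1 m + b s2 m,
      forall s m1 m2, D m1 -> D m2 -> b s (m1 + m2) = b s m1 + b s m2,
      forall (r : R) s m, D m -> b (r *: s) m = r *: b s m
    & forall (r : R) s m, D m -> b s (r *: m) = r *: b s m].

(* Equality in S (x) D, for D a submodule of M. *)
Definition tensor_eq_on D t u := forall (P : lmodType R) (b : S -> M -> P),
  bilinear_on D b -> teval b t = teval b u.

Lemma bilinear_onT (P : lmodType R) (b : S -> M -> P) :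
  bilinear_map b -> bilinear_on (fun _ => True) b.
Proof. by case=> h1 h2 h3 h4; split=> *; rewrite ?h1 ?h2 ?h3 ?h4. Qed.

Lemma bilinear_on_sub D D' (P : lmodType R) (b : S -> M -> P) :
  (forall m, D' m -> D m) -> bilinear_on D b -> bilinear_on D' b.
Proof. by move=> hD [h1 h2 h3 h4]; split=> *; rewrite ?h1 ?h2 ?h3 ?h4 //; apply: hD. Qed.

Lemma teval_cat (P : lmodType R) (b : S -> M -> P) t u :
  teval b (t ++ u) = teval b t + teval b u.
Proof. exact: big_cat. Qed.

Lemma expr_in_sub D D' t : (forall m, D m -> D' m) -> expr_in D t -> expr_in D' t.
Proof. by move=> h ht x hx; apply: h; apply: ht. Qed.

Lemma expr_in_cat D t u : expr_in D (t ++ u) <-> expr_in D t /\ expr_in D u.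
Proof.
split=> [h|[h1 h2] x]; first by split=> x hx; apply: h; rewrite mem_cat hx ?orbT.
by rewrite mem_cat => /orP[]; [apply: h1|apply: h2].
Qed.

Lemma expr_in_cons D x t : expr_in D (x :: t) <-> D x.2 /\ expr_in D t.
Proof.
split=> [h|[h1 h2] y]; last by rewrite inE => /orP[/eqP->|]; [|apply: h2].
by split=> [|y hy]; apply: h; rewrite inE ?eqxx ?hy ?orbT.
Qed.

Lemma expr_in_scale D r t : expr_in D t -> expr_in D (tscale r t).
Proof. by move=> ht y /mapP[x hx ->]; apply: (ht x). Qed.
Lemma expr_in_opp D t : expr_in D t -> expr_in D (topp t).
Proof. by move=> ht y /mapP[x hx ->]; apply: (ht x). Qed.

Lemma teval_scale D (P : lmodType R) (b : S -> M -> P) r t :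
  expr_in D t -> bilinear_on D b -> teval b (tscale r t) = r *: teval b t.
Proof.
move=> ht [_ _ h3 _]; elim: t ht => [|x t IH]; first by rewrite !big_nil scaler0.
by case/expr_in_cons=> h1 h2; rewrite /tscale /= !big_cons /= h3 // IH // scalerDr.
Qed.

Lemma teval_opp D (P : lmodType R) (b : S -> M -> P) t :
  expr_in D t -> bilinear_on D b -> teval b (topp t) = - teval b t.
Proof.
move=> ht hb; have -> : topp t = tscale (-1) t by apply: eq_map => x; rewrite scaleN1r.
by rewrite (teval_scale _ ht hb) scaleN1r.
Qed.

(* Identities valid in every tensor product S (x) <D> containing both sides. *)
Definition formal_eq t u := forall D (P : lmodType R) (b : S -> M -> P),
  expr_in D t -> expr_in D u -> bilinear_on D b -> teval b t = teval b u.

Lemma formal_eq_refl t : formal_eq t t.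
Proof. by []. Qed.

Lemma formal_eq_addC t u : formal_eq (t ++ u) (u ++ t).
Proof. by move=> *; rewrite !teval_cat addrC. Qed.

Lemma formal_eq_addN t : formal_eq (topp t ++ t) [::].
Proof.
move=> D P b /expr_in_cat[_ ht] _ hb.
by rewrite teval_cat (teval_opp ht hb) addNr big_nil.
Qed.

Lemma formal_eq_scaleDl a c t : formal_eq (tscale (a + c) t) (tscale a t ++ tscale c t).
Proof.
move=> D P b hac _ hb.
have ht : expr_in D t by move=> x hx; apply: (hac (_, x.2)); apply: map_f.
by rewrite teval_cat !(teval_scale _ ht hb) scalerDl.
Qed.

Lemma tscaleA a c t : tscale a (tscale c t) = tscale (a * c) t.
Proof. by rewrite /tscale -map_comp; apply: eq_map => x /=; rewrite scalerA. Qed.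
Lemma tscale1 t : tscale 1 t = t.
Proof. by rewrite /tscale (eq_map (g := id)) ?map_id // => -[x y] /=; rewrite scale1r. Qed.
Lemma tscaleDr a t u : tscale a (t ++ u) = tscale a t ++ tscale a u.
Proof. exact: map_cat. Qed.

Record tcongruence := TCongruence {
  tc_eqv : tensor_expr S M -> tensor_expr S M -> Prop;
  tc_sym : forall t u, tc_eqv t u -> tc_eqv u t;
  tc_trans : forall t u v, tc_eqv t u -> tc_eqv u v -> tc_eqv t v;
  tc_cat : forall t t' u u', tc_eqv t t' -> tc_eqv u u' -> tc_eqv (t ++ u) (t' ++ u');
  tc_opp : forall t t', tc_eqv t t' -> tc_eqv (topp t) (topp t');
  tc_scale : forall r t t', tc_eqv t t' -> tc_eqv (tscale r t) (tscale r t');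
  tc_formal : forall t u, formal_eq t u -> tc_eqv t u
}.

Definition tcongruence_setoid (T : tcongruence) : setoidMod R.
Proof.
refine (@SetoidMod R (tensor_expr S M) (tc_eqv T) cat [::] topp tscale
  _ (@tc_sym T) (@tc_trans T) (@tc_cat T) (@tc_opp T) (@tc_scale T) _ _ _ _ _ _ _ _);
  move=> *; apply: tc_formal.
- exact: formal_eq_refl.
- by rewrite catA.
- exact: formal_eq_addC.
- exact: formal_eq_refl.
- exact: formal_eq_addN.
- by rewrite tscaleA.
- by rewrite tscale1.
- by rewrite tscaleDr.
- exact: formal_eq_scaleDl.
Defined.

(* Universal property of S (x) M: [s (x) m] is bilinear in the quotient of the
   expressions by any such congruence, so tensor-equal expressions are congruent. *)
Lemma tensor_eq_tcongruence (T : tcongruence) :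
  (forall s m1 m2, tc_eqv T [:: (s, m1 + m2)] [:: (s, m1); (s, m2)]) ->
  (forall (r : R) s m, tc_eqv T [:: (s, r *: m)] [:: (r *: s, m)]) ->
  forall t u, tensor_eq t u -> tc_eqv T t u.
Proof.
move=> hadd hscale t u htu.
pose st := tcongruence_setoid T.
pose b0 (s : S) (m : M) : setoid_quot st := qclass (st := st) [:: (s, m)].
have hb0 : bilinear_map b0.
  split=> [s1 s2 m|s m1 m2|r s m|r s m]; rewrite /b0 ?(=^~ qclassD, =^~ qclassZ) //;
    apply/qclassP; [|exact: hadd|exact: hscale].
  apply: tc_formal => D P b /expr_in_cons[hm _] _ [h1 _ _ _].
  by rewrite !big_cons !big_nil /= !addr0 h1.
have tevalE w : teval b0 w = qclass (st := st) w.
  elim: w => [|[s m] w IH]; first by rewrite big_nil.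
  by rewrite big_cons IH /b0 -qclassD.
by apply/(qclassP (st := st)); rewrite -!tevalE; apply: htu.
Qed.

End TensorExpressions.

Section TensorEq.
Variables (R : comPzRingType) (S M : lmodType R).
Implicit Types (t u v : tensor_expr S M).

Lemma teval_oppT (P : lmodType R) (b : S -> M -> P) t :
  bilinear_map b -> teval b (topp t) = - teval b t.
Proof. by move=> hb; apply: (@teval_opp _ _ _ (fun _ => True)) => //; apply: bilinear_onT. Qed.
Lemma teval_scaleT (P : lmodType R) (b : S -> M -> P) r t :
  bilinear_map b -> teval b (tscale r t) = r *: teval b t.
Proof. by move=> hb; apply: (@teval_scale _ _ _ (fun _ => True)) => //; apply: bilinear_onT. Qed.

Lemma tensor_eq_trans t u v : tensor_eq t u -> tensor_eq u v -> tensor_eq t v.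
Proof. by move=> h1 h2 P b hb; rewrite [LHS](h1 P b hb) (h2 P b hb). Qed.

Lemma tensor_eq_formal t u : formal_eq t u -> tensor_eq t u.
Proof. by move=> h P b hb; apply: (h (fun _ => True)) => //; apply: bilinear_onT. Qed.

Lemma tensor_zero_of_zero t : (forall x, x \in t -> x.2 = 0) -> tensor_zero t.
Proof.
move=> h P b [_ h2 _ _]; rewrite big_nil.
have b0 s : b s 0 = 0 by apply: (addrI (b s 0)); rewrite -h2 !addr0.
by rewrite big1_seq // => x /h ->.
Qed.

End TensorEq.

Definition tmap (R : comPzRingType) (S M N : lmodType R) (f : M -> N)
  (t : tensor_expr S M) : tensor_expr S N := map (fun x => (x.1, f x.2)) t.

Lemma tensor_eq_tmap (R : comPzRingType) (S M N : lmodType R) (f : M -> N) :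
  linear f -> forall t u : tensor_expr S M, tensor_eq t u -> tensor_eq (tmap f t) (tmap f u).
Proof.
move=> f_lin t u h P b [h1 h2 h3 h4]; rewrite !big_map; apply: (h P (fun s m => b s (f m))).
by split=> *; rewrite ?h1 ?h3 ?(linearfD f_lin) ?h2 ?(linearfZ f_lin) ?h4.
Qed.

Section ImageCongruence.
Variables (R : comPzRingType) (S F : lmodType R) (K : F -> Prop).

Definition eq_mod_image (t u : tensor_expr S F) :=
  exists v, expr_in K v /\ tensor_eq t (u ++ v).

Definition image_congruence : tcongruence S F.
Proof.
refine (@TCongruence R S F eq_mod_image _ _ _ _ _ _).
- move=> t u [v [hv h]]; exists (topp v); split; first exact: expr_in_opp.
  by move=> P b hb; rewrite teval_cat (h P b hb) teval_cat teval_oppT // addrK.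
- move=> t u w [v [hv h]] [v' [hv' h']]; exists (v' ++ v); split; first exact/expr_in_cat.
  by move=> P b hb; rewrite (h P b hb) teval_cat (h' P b hb) !teval_cat addrA.
- move=> t t' u u' [v [hv h]] [v' [hv' h']]; exists (v ++ v'); split; first exact/expr_in_cat.
  by move=> P b hb; rewrite !teval_cat (h P b hb) (h' P b hb) !teval_cat addrACA.
- move=> t t' [v [hv h]]; exists (topp v); split; first exact: expr_in_opp.
  by move=> P b hb; rewrite teval_cat !teval_oppT // (h P b hb) teval_cat opprD.
- move=> r t t' [v [hv h]]; exists (tscale r v); split; first exact: expr_in_scale.
  by move=> P b hb; rewrite teval_cat !teval_scaleT // (h P b hb) teval_cat scalerDr.
- by move=> t u h; exists [::]; split => //; rewrite cats0; apply: tensor_eq_formal.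
Defined.

End ImageCongruence.

Section RightExactness.
Variables (R : comPzRingType) (S F M : lmodType R) (phi : F -> M).
Hypotheses (phi_lin : linear phi) (phi_surj : forall m, exists x, phi x = m).

Definition phi_sect (m : M) : F := projT1 (cid (phi_surj m)).

Lemma phi_sectK m : phi (phi_sect m) = m.
Proof. by rewrite /phi_sect; case: cid. Qed.

Lemma tmap_sectK (t : tensor_expr S M) : tmap phi (tmap phi_sect t) = t.
Proof. by rewrite /tmap -map_comp -[RHS]map_id; apply: eq_map => -[s m] /=; rewrite phi_sectK. Qed.

(* Modulo S (x) ker phi, the class of s (x) phi_sect m does not depend on the choice
   of the section and is bilinear in (s, m); apply the universal property. *)
Lemma tensor_right_exact (t u : tensor_expr S F) :
  tensor_eq (tmap phi t) (tmap phi u) -> eq_mod_image (fun x => phi x = 0) t u.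
Proof.
move=> h.
pose T := image_congruence S (fun x => phi x = 0).
have single (s : S) p q : phi p = phi q -> tc_eqv T [:: (s, p)] [:: (s, q)].
  move=> hpq; exists [:: (s, p - q)]; split.
    by move=> x; rewrite inE => /eqP -> /=; rewrite (linearfB phi_lin) hpq subrr.
  move=> P b [_ h2 _ _]; rewrite /= !big_cons !big_nil /= !addr0 -h2.
  by rewrite addrC subrK.
pose st := tcongruence_setoid T.
pose b (s : S) (m : M) : setoid_quot st := qclass (st := st) [:: (s, phi_sect m)].
have hb : bilinear_map b.
  split=> [s1 s2 m|s m1 m2|r s m|r s m]; rewrite /b ?(=^~ qclassD, =^~ qclassZ) //;
    apply/(qclassP (st := st)).
  - apply: tc_formal => D P c /expr_in_cons[hm _] _ [h1 _ _ _].
    by rewrite !big_cons !big_nil /= !addr0 h1.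
  - apply: (tc_trans (single _ _ (phi_sect m1 + phi_sect m2) _)).
      by rewrite (linearfD phi_lin) !phi_sectK.
    apply: tc_formal => D P c _ /expr_in_cons[h1 /expr_in_cons[h2 _]] [_ hD _ _].
    by rewrite !big_cons !big_nil /= !addr0 hD.
  - apply: (tc_trans (single _ _ (r *: phi_sect m) _)).
      by rewrite (linearfZ phi_lin) !phi_sectK.
    apply: tc_formal => D P c _ /expr_in_cons[hm _] [_ _ h3 h4].
    by rewrite !big_cons !big_nil /= !addr0 h3 ?h4.
have tevalE w : teval b (tmap phi w) = qclass (st := st) w.
  elim: w => [|[s m] w IH]; first by rewrite big_nil.
  have -> : qclass (st := st) ((s, m) :: w) = qclass (st := st) [:: (s, m)] + qclass (st := st) w.
    by rewrite -qclassD.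
  rewrite big_cons IH /b.
  by congr (_ + _); apply/qclassP; apply: single; rewrite phi_sectK.
by apply/(qclassP (st := st)); rewrite -!tevalE; apply: h.
Qed.

End RightExactness.

Section FiniteSpan.
Variables (R : comPzRingType) (M : lmodType R).

Inductive fspan (g : seq M) : M -> Prop :=
| fspan0 : fspan g 0
| fspan_mem m : m \in g -> fspan g m
| fspan_comb (a : R) u v : fspan g u -> fspan g v -> fspan g (a *: u + v).

Lemma fspanD g u v : fspan g u -> fspan g v -> fspan g (u + v).
Proof. by move=> hu hv; have := fspan_comb 1 hu hv; rewrite scale1r. Qed.
Lemma fspanZ g a u : fspan g u -> fspan g (a *: u).
Proof. by move=> hu; have := fspan_comb a hu (fspan0 g); rewrite addr0. Qed.

Lemma fspan_sub g g' m : (forall x, x \in g -> fspan g' x) -> fspan g m -> fspan g' m.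
Proof. by move=> h; elim=> [|x /h|a u v _ hu _ hv] //; [exact: fspan0|exact: fspan_comb]. Qed.

Lemma fspan_catl g g' m : fspan g m -> fspan (g ++ g') m.
Proof. by apply: fspan_sub => x hx; apply: fspan_mem; rewrite mem_cat hx. Qed.
Lemma fspan_catr g g' m : fspan g' m -> fspan (g ++ g') m.
Proof. by apply: fspan_sub => x hx; apply: fspan_mem; rewrite mem_cat hx orbT. Qed.

End FiniteSpan.

Section FiniteReduction.
Variables (R : comPzRingType) (S M : lmodType R).
Implicit Types (t u : tensor_expr S M).

Definition eq_on_fin_span t u := exists g : seq M,
  [/\ expr_in (fspan g) t, expr_in (fspan g) u & tensor_eq_on (fspan g) t u].

Definition fin_span_congruence : tcongruence S M.
Proof.
refine (@TCongruence R S M eq_on_fin_span _ _ _ _ _ _).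
- by move=> t u [g [h1 h2 h3]]; exists g; split => // P b hb; symmetry; apply: h3.
- move=> t u v [g [h1 h2 h3]] [g' [h1' h2' h3']]; exists (g ++ g'); split.
  + by apply: expr_in_sub h1 => m; apply: fspan_catl.
  + by apply: expr_in_sub h2' => m; apply: fspan_catr.
  + move=> P b hb; rewrite (h3 P b); last by apply: bilinear_on_sub hb => m; apply: fspan_catl.
    by apply: h3'; apply: bilinear_on_sub hb => m; apply: fspan_catr.
- move=> t t' u u' [g [h1 h2 h3]] [g' [h1' h2' h3']]; exists (g ++ g').
  have hl := @fspan_catl _ _ g g'; have hr := @fspan_catr _ _ g g'.
  split; first (by apply/expr_in_cat; split; [exact: expr_in_sub h1|exact: expr_in_sub h1']);
    first (by apply/expr_in_cat; split; [exact: expr_in_sub h2|exact: expr_in_sub h2']).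
  move=> P b hb; rewrite !teval_cat (h3 P b) ?(h3' P b) //; exact: bilinear_on_sub hb.
- move=> t t' [g [h1 h2 h3]]; exists g; split; try exact: expr_in_opp.
  by move=> P b hb; rewrite (teval_opp h1 hb) (teval_opp h2 hb) (h3 P b hb).
- move=> r t t' [g [h1 h2 h3]]; exists g; split; try exact: expr_in_scale.
  by move=> P b hb; rewrite (teval_scale _ h1 hb) (teval_scale _ h2 hb) (h3 P b hb).
- move=> t u h; exists (map snd (t ++ u)).
  have /expr_in_cat[h1 h2] : expr_in (fspan (map snd (t ++ u))) (t ++ u).
    by move=> x hx; apply: fspan_mem; apply: map_f.
  by split => // P b hb; apply: (h _ P b h1 h2 hb).
Defined.

Lemma tensor_eq_fin_span t u : tensor_eq t u -> eq_on_fin_span t u.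
Proof.
have mem1 (m : M) g : fspan (m :: g) m by apply: fspan_mem; rewrite inE eqxx.
have mem2 (m m' : M) : fspan [:: m; m'] m' by apply: fspan_mem; rewrite !inE eqxx orbT.
apply: (tensor_eq_tcongruence (T := fin_span_congruence)).
- move=> s m1 m2; exists [:: m1; m2]; split.
  + by move=> x; rewrite inE => /eqP -> /=; apply: fspanD.
  + by move=> x; rewrite !inE => /orP[] /eqP ->.
  + by move=> P b [_ h2 _ _]; rewrite !big_cons !big_nil /= !addr0 h2.
- move=> r s m; exists [:: m]; split.
  + by move=> x; rewrite inE => /eqP -> /=; apply: fspanZ.
  + by move=> x; rewrite inE => /eqP ->.
  + by move=> P b [_ _ h3 h4]; rewrite !big_cons !big_nil /= !addr0 h3 ?h4.
Qed.

End FiniteReduction.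

Section Submodules.
Variables (R : comPzRingType) (M : lmodType R) (N : M -> Prop).
Hypothesis N_sub : is_submodule N.

Lemma submod0 : N 0. Proof. by case: N_sub. Qed.
Lemma submodD x y : N x -> N y -> N (x + y).
Proof. by case: N_sub => _ h hx hy; have := h 1 _ _ hx hy; rewrite scale1r. Qed.
Lemma submodZ a x : N x -> N (a *: x).
Proof. by case: N_sub => h0 h hx; have := h a _ _ hx h0; rewrite addr0. Qed.
Lemma submodN x : N x -> N (- x).
Proof. by move=> hx; rewrite -scaleN1r; apply: submodZ. Qed.
Lemma submodB x y : N x -> N y -> N (x - y).
Proof. by move=> hx hy; apply: submodD => //; apply: submodN. Qed.

Lemma submod_sub_eq x y : x = y -> N (x - y).
Proof. by move=> ->; rewrite subrr; apply: submod0. Qed.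

Definition quot_setoid : setoidMod R.
Proof.
refine (@SetoidMod R M (fun x y => N (x - y)) +%R 0 -%R *:%R _ _ _ _ _ _ _ _ _ _ _ _ _ _).
- by move=> x; apply: submod_sub_eq.
- by move=> x y h; rewrite -opprB; apply: submodN.
- by move=> x y z h1 h2; have := submodD h1 h2; rewrite addrA subrK.
- by move=> x x' y y' h1 h2; have := submodD h1 h2; rewrite opprD addrACA.
- by move=> x x' h; rewrite -opprD; apply: submodN.
- by move=> r x x' h; rewrite -scalerBr; apply: submodZ.
- by move=> x y z; apply: submod_sub_eq; rewrite /= addrA.
- by move=> x y; apply: submod_sub_eq; rewrite /= addrC.
- by move=> x; apply: submod_sub_eq; rewrite /= add0r.
- by move=> x; apply: submod_sub_eq; rewrite /= addNr.
- by move=> a b x; apply: submod_sub_eq; rewrite /= scalerA.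
- by move=> x; apply: submod_sub_eq; rewrite /= scale1r.
- by move=> a x y; apply: submod_sub_eq; rewrite /= scalerDr.
- by move=> a b x; apply: submod_sub_eq; rewrite /= scalerDl.
Defined.

Definition quot_mod := setoid_quot quot_setoid.
Definition qpi (x : M) : quot_mod := qclass (st := quot_setoid) x.

Lemma qpi_linear : linear qpi.
Proof. by move=> a x y; rewrite /qpi -qclassZ -qclassD. Qed.

Lemma qpi_surj q : exists x, qpi x = q.
Proof. by case: (qclass_surj q) => x ->; exists x. Qed.

Lemma qpiP x y : qpi x = qpi y <-> N (x - y).
Proof. exact: qclassP. Qed.

Lemma qpi_eq0 x : qpi x = 0 <-> N x.
Proof. by rewrite -[0 : quot_mod]/(qpi 0) qpiP subr0. Qed.

Lemma fin_gen_quot : fin_gen M -> fin_gen quot_mod.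
Proof.
case=> n [g hg]; exists n, (fun i => qpi (g i)) => q.
case: (qpi_surj q) => x <-; case: (hg x) => c ->; exists c.
exact: (linearf_sum qpi_linear).
Qed.

End Submodules.

Lemma image_submod (R : comPzRingType) (M M' : lmodType R) (phi : M -> M')
    (N : M -> Prop) :
  linear phi -> is_submodule N -> is_submodule (fun y => exists2 x, N x & phi x = y).
Proof.
move=> phi_lin [N0 NC]; split; first by exists 0 => //; apply: linearf0.
by move=> a _ _ [x hx <-] [y hy <-]; exists (a *: x + y); [apply: NC|apply: phi_lin].
Qed.

Lemma preimage_submod (R : comPzRingType) (M M' : lmodType R) (phi : M -> M')
    (N : M' -> Prop) :
  linear phi -> is_submodule N -> is_submodule (fun x => N (phi x)).
Proof.
move=> phi_lin [N0 NC]; split; first by rewrite (linearf0 phi_lin).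
by move=> a x y hx hy; rewrite phi_lin; apply: NC.
Qed.

Section FiniteGeneration.
Variable R : comPzRingType.

Lemma fin_gen_free_fin_gen (M : lmodType R) : fin_gen_free M -> fin_gen M.
Proof. by case=> n [e he]; exists n, e => m; case: (he m) => c [hc _]; exists c. Qed.

Lemma rV_fin_gen_free n : fin_gen_free 'rV[R]_n.
Proof.
exists n, (fun i => delta_mx 0 i) => m; exists [ffun i => m 0 i]; split.
  by rewrite [LHS]row_sum_delta; apply: eq_bigr => i _; rewrite ffunE.
move=> c hc; apply/ffunP => j; rewrite ffunE hc summxE.
rewrite (bigD1 j) //= big1 ?addr0; first by rewrite !mxE eqxx /= eqxx mulr1.
by move=> i hij; rewrite !mxE eqxx /= eq_sym (negbTE hij) mulr0.
Qed.

Variables (M : lmodType R) (n : nat) (g : 'I_n -> M).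

Definition lincomb (x : 'rV[R]_n) : M := \sum_(i < n) x 0 i *: g i.

Lemma lincomb_linear : linear lincomb.
Proof.
move=> a x y; rewrite /lincomb scaler_sumr -big_split; apply: eq_bigr => i _.
by rewrite !mxE scalerDl scalerA.
Qed.

Lemma lincomb_delta i : lincomb (delta_mx 0 i) = g i.
Proof.
rewrite /lincomb (bigD1 i) //= big1 ?addr0; first by rewrite !mxE !eqxx scale1r.
by move=> j hj; rewrite !mxE eqxx /= (negbTE hj) scale0r.
Qed.

Lemma lincomb_surj : (forall m, exists c : 'I_n -> R, m = \sum_(i < n) c i *: g i) ->
  forall m, exists x, lincomb x = m.
Proof.
move=> hg m; case: (hg m) => c ->; exists (\row_i c i).
by apply: eq_bigr => i _; rewrite mxE.
Qed.

End FiniteGeneration.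

Lemma zero_submod (R : comPzRingType) (M : lmodType R) : is_submodule (fun x : M => x = 0).
Proof. by split=> // a u v -> ->; rewrite scaler0 addr0. Qed.

(* The span of a finite family, realised as R^n / ker (lincomb). *)
Lemma fspan_embedding (R : comPzRingType) (V : lmodType R) (G : seq V) :
  exists (X : lmodType R) (psi : X -> V),
    [/\ fin_gen X, linear psi, injective psi & forall y, fspan G y -> exists x, psi x = y].
Proof.
pose Phi := lincomb (fun i : 'I_(size G) => G`_i).
have Phi_lin : linear Phi := lincomb_linear _.
have hK := preimage_submod Phi_lin (zero_submod V).
pose psi (q : quot_mod hK) := Phi (qrepr q).
have psiE x : psi (qpi hK x) = Phi x.
  have /qpiP := qreprK (qpi hK x).
  by rewrite (linearfB Phi_lin) => /eqP; rewrite subr_eq0 => /eqP.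
have psi_lin : linear psi.
  move=> a q1 q2; case: (qpi_surj q1) (qpi_surj q2) => x1 <- [x2 <-].
  by rewrite -qpi_linear !psiE Phi_lin.
exists (quot_mod hK), psi; split => //.
- exact: fin_gen_quot (fin_gen_free_fin_gen (rV_fin_gen_free _ _)).
- move=> q1 q2; case: (qpi_surj q1) (qpi_surj q2) => x1 <- [x2 <-]; rewrite !psiE => e.
  by apply/qpiP; rewrite /= (linearfB Phi_lin) e subrr.
- move=> y; elim=> [|m hm|a u v _ [qu hu] _ [qv hv]].
  + by exists 0; apply: (linearf0 psi_lin).
  + have hi : (index m G < size G)%N by rewrite index_mem.
    by exists (qpi hK (delta_mx 0 (Ordinal hi))); rewrite psiE /Phi lincomb_delta /= nth_index.
  + by exists (a *: qu + qv); rewrite psi_lin hu hv.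
Qed.

Section TensorImages.
Variables (R : comPzRingType) (S : lmodType R).

Lemma in_tensor_image_sub (M : lmodType R) (D D' : M -> Prop) (t : tensor_expr S M) :
  (forall m, D m -> D' m) -> in_tensor_image D t -> in_tensor_image D' t.
Proof. by move=> hD [t' [h1 h2]]; exists t'; split => // x /h1; apply: hD. Qed.

Lemma in_tensor_image_tmap (M M' : lmodType R) (phi : M -> M') (D : M -> Prop)
    (t : tensor_expr S M) :
  linear phi -> in_tensor_image D t ->
  in_tensor_image (fun y => exists2 x, D x & phi x = y) (tmap phi t).
Proof.
move=> phi_lin [t' [h1 h2]]; exists (tmap phi t'); split; last exact: tensor_eq_tmap.
by move=> _ /mapP[x hx ->]; exists x.2 => //; apply: h1.
Qed.

Lemma in_tensor_image_lift (F M : lmodType R) (phi : F -> M)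
    (phi_lin : linear phi) (phi_surj : forall m, exists x, phi x = m)
    (N : M -> Prop) (t : tensor_expr S M) :
  N 0 -> in_tensor_image N t ->
  in_tensor_image (fun x => N (phi x)) (tmap (phi_sect phi_surj) t).
Proof.
move=> N0 [t' [h1 h2]].
have [|v [hv htv]] := tensor_right_exact phi_lin phi_surj (t := tmap (phi_sect phi_surj) t)
  (u := tmap (phi_sect phi_surj) t'); first by rewrite !tmap_sectK.
exists (tmap (phi_sect phi_surj) t' ++ v); split => // x.
by rewrite mem_cat => /orP[/mapP[y /h1 hy ->]|/hv ->] //=; rewrite phi_sectK.
Qed.

Lemma in_tensor_image_quot (M : lmodType R) (N : M -> Prop) (N_sub : is_submodule N)
    (t : tensor_expr S M) :
  tensor_zero (tmap (qpi N_sub) t) -> in_tensor_image N t.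
Proof.
move=> hz; have [v [hv htv]] := tensor_right_exact (qpi_linear N_sub) (@qpi_surj _ _ _ N_sub)
  (t := t) (u := [::]) hz.
by exists v; split => // x /hv /qpi_eq0.
Qed.

End TensorImages.

Section Implications.
Variables (R : comPzRingType) (S : lmodType R).

Definition sharp_fin_gen := forall M : lmodType R, fin_gen M ->
  forall (L : Type) (Ml : L -> M -> Prop), (forall l, is_submodule (Ml l)) -> prop_sharp S Ml.

Definition sharp_fin_gen_free := forall M : lmodType R, fin_gen_free M ->
  forall (L : Type) (Ml : L -> M -> Prop), (forall l, is_submodule (Ml l)) -> prop_sharp S Ml.

Definition tensor_intersection_vanishing := forall M : lmodType R, fin_gen M ->
  forall (L : Type) (Ml : L -> M -> Prop), (forall l, is_submodule (Ml l)) ->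
  (forall m : M, (forall l, Ml l m) -> m = 0) ->
  forall t : tensor_expr S M, (forall l, in_tensor_image (Ml l) t) -> tensor_zero t.

Lemma vanishing_of_sharp_free : sharp_fin_gen_free -> tensor_intersection_vanishing.
Proof.
move=> hsharp M [n [g hg]] L Ml Ml_sub hint t ht.
have phi_surj := lincomb_surj hg; have phi_lin := lincomb_linear g.
have [|w [hw htw]] := (hsharp _ (rV_fin_gen_free R n) L _
  (fun l => preimage_submod phi_lin (Ml_sub l)) (tmap (phi_sect phi_surj) t)).2.
  by move=> l; apply: (in_tensor_image_lift phi_lin phi_surj (N := Ml l));
    [apply: submod0|apply: ht].
have := tensor_eq_tmap phi_lin htw; rewrite tmap_sectK => htw'.
apply: tensor_eq_trans htw' _; apply: tensor_zero_of_zero => _ /mapP[x hx ->].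
by apply: hint => l; apply: hw.
Qed.

(* Pass to M / (meet of the M_l), where the images of the M_l meet in 0. *)
Lemma sharp_of_vanishing : tensor_intersection_vanishing -> sharp_fin_gen.
Proof.
move=> hvan M hM L Ml Ml_sub t; split=> [hmeet l|himg].
  by apply: in_tensor_image_sub hmeet.
pose N m := forall l, Ml l m.
have N_sub : is_submodule N.
  by split=> [l|a u v hu hv l]; [apply: submod0|case: (Ml_sub l) => _; apply].
apply: (in_tensor_image_quot (N_sub := N_sub)).
apply: (hvan _ (fin_gen_quot N_sub hM) L _
  (fun l => image_submod (qpi_linear N_sub) (Ml_sub l))).
  move=> q hq; case: (qpi_surj q) hq => m <- hq; apply/qpi_eq0 => l.
  have [x hx /qpiP hxm] := hq l.
  by have := submodB (Ml_sub l) hx (hxm l); rewrite opprB addrC subrK.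
by move=> l; apply: in_tensor_image_tmap (qpi_linear N_sub) (himg l).
Qed.

End Implications.

Lemma pair_addE (R : comPzRingType) (M N : lmodType R) (x1 x2 : M) (y1 y2 : N) :
  (x1 + x2, y1 + y2) = (x1, y1) + (x2, y2) :> M * N.
Proof. by []. Qed.

Lemma pair_scaleE (R : comPzRingType) (M N : lmodType R) a (x : M) (y : N) :
  (a *: x, a *: y) = a *: (x, y) :> M * N.
Proof. by []. Qed.

Lemma fspan_linear (R : comPzRingType) (M M' : lmodType R) (h : M -> M') (g : seq M) m :
  linear h -> fspan g m -> fspan (map h g) (h m).
Proof.
move=> h_lin; elim=> [|x hx|a u v _ hu _ hv].
- by rewrite (linearf0 h_lin); apply: fspan0.
- by apply: fspan_mem; apply: map_f.
- by rewrite h_lin; apply: fspan_comb.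
Qed.

Section GraphAndVertical.
Variables (R : comPzRingType) (S N M X : lmodType R) (f : {linear N -> M}).
Hypothesis f_inj : injective f.
Variable psi : X -> M * N.
Hypotheses (psi_lin : linear psi) (psi_inj : injective psi).

Definition psi_inv (y : M * N) : X :=
  if pselect (exists x, psi x = y) is left e then projT1 (cid e) else 0.

Lemma psi_invK y : (exists x, psi x = y) -> psi (psi_inv y) = y.
Proof. by move=> hy; rewrite /psi_inv; case: pselect => // e; case: cid. Qed.

Lemma psi_inv_psi x : psi (psi_inv (psi x)) = psi x.
Proof. by apply: psi_invK; exists x. Qed.

Lemma psi_invD y1 y2 : (exists x, psi x = y1) -> (exists x, psi x = y2) ->
  psi_inv (y1 + y2) = psi_inv y1 + psi_inv y2.
Proof.
move=> [x1 <-] [x2 <-]; apply: psi_inj.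
by rewrite -(linearfD psi_lin) psi_inv_psi !(linearfD psi_lin) !psi_inv_psi.
Qed.

Lemma psi_invZ a y : (exists x, psi x = y) -> psi_inv (a *: y) = a *: psi_inv y.
Proof.
move=> [x <-]; apply: psi_inj.
by rewrite -(linearfZ psi_lin) psi_inv_psi !(linearfZ psi_lin) !psi_inv_psi.
Qed.

(* The graph of f and the vertical axis 0 x N, intersected with the image of psi. *)
Definition graph_vertical (b : bool) (q : X) : Prop :=
  if b then exists n, psi q = (f n, n) else (psi q).1 = 0.

Lemma graph_vertical_submod b : is_submodule (graph_vertical b).
Proof.
rewrite /graph_vertical; case: b; split.
- by exists 0; rewrite (linearf0 psi_lin) linear0.
- by move=> a u v [nu hu] [nv hv]; exists (a *: nu + nv); rewrite psi_lin hu hv linearP.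
- by rewrite (linearf0 psi_lin).
- by move=> a u v hu hv; rewrite psi_lin /= hu hv scaler0 addr0.
Qed.

Lemma graph_vertical_meet q : (forall b, graph_vertical b q) -> q = 0.
Proof.
move=> hq; have [n e] := hq true; have := hq false; rewrite /graph_vertical e /= => fn0.
have n0 : n = 0 by apply: f_inj; rewrite fn0 linear0.
by apply: psi_inj; rewrite e n0 linear0 (linearf0 psi_lin).
Qed.

Variables (t : tensor_expr S N) (g : seq M).
Hypotheses (t_g : expr_in (fspan g) (tmap f t))
  (tg0 : tensor_eq_on (fspan g) (tmap f t) [::]).
Hypotheses (im_g : forall m, fspan g m -> exists x, psi x = (m, 0))
  (im_t : forall y, y \in t -> exists x, psi x = (0, y.2)).

Lemma fspan_f y : y \in t -> fspan g (f y.2).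
Proof. by move=> hy; apply: (t_g (x := (y.1, f y.2))); apply: (map_f (fun y => (y.1, f y.2))). Qed.

Lemma im_graph y : y \in t -> exists x, psi x = (f y.2, y.2).
Proof.
move=> hy; have [x1 e1] := im_g (fspan_f hy); have [x2 e2] := im_t hy.
by exists (x1 + x2); rewrite (linearfD psi_lin) e1 e2 -pair_addE addr0 add0r.
Qed.

Definition graph_expr : tensor_expr S X := map (fun y => (y.1, psi_inv (f y.2, y.2))) t.

Lemma graph_expr_in_graph : in_tensor_image (graph_vertical true) graph_expr.
Proof.
exists graph_expr; split=> // _ /mapP[y hy ->] /=.
by exists y.2; rewrite psi_invK //; apply: im_graph.
Qed.

(* (f n, n) = (f n, 0) + (0, n), and the sum of the (f n_i, 0)-terms vanishes
   because the image of t already vanishes in S (x) <g>. *)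
Lemma graph_expr_in_vertical : in_tensor_image (graph_vertical false) graph_expr.
Proof.
exists (map (fun y => (y.1, psi_inv (0, y.2))) t); split.
  by move=> _ /mapP[y hy ->]; rewrite /graph_vertical psi_invK //; apply: im_t.
move=> P b [h1 h2 h3 h4]; rewrite !big_map.
pose b' (s : S) (m : M) := b s (psi_inv (m, 0)).
have hb' : bilinear_on (fspan g) b'.
  split=> [s1 s2 m _|s m1 m2 hm1 hm2|r s m _|r s m hm]; rewrite /b' ?h1 ?h3 //.
    rewrite -{1}(addr0 (0 : N)) pair_addE psi_invD ?h2 //; exact: im_g.
  rewrite -{1}(scaler0 N r) pair_scaleE psi_invZ ?h4 //; exact: im_g.
have := tg0 hb'; rewrite big_nil big_map => e0; rewrite -[RHS]add0r -[X in _ = X + _]e0 -big_split /=.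
apply: eq_big_seq => y hy; rewrite /b' -h2 -psi_invD; [|exact: im_g (fspan_f hy)|exact: im_t].
by rewrite -pair_addE addr0 add0r.
Qed.

Lemma tmap_graph_expr : tmap (fun x => (psi x).2) graph_expr = t.
Proof.
rewrite /tmap -map_comp -[RHS]map_id; apply/eq_in_map => y hy /=.
by rewrite psi_invK; [case: y hy|apply: im_graph].
Qed.

End GraphAndVertical.

Lemma flat_of_vanishing (R : comPzRingType) (S : lmodType R) :
  tensor_intersection_vanishing S -> flat_module S.
Proof.
move=> hvan N M f f_inj t hz.
have [g [t_g _ tg0]] := tensor_eq_fin_span hz.
pose G := map (fun m => (m, 0 : N)) g ++ map (fun y => (0 : M, y.2)) t.
have [X [psi [hX psi_lin psi_inj psi_G]]] := fspan_embedding G.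
have inl_lin : linear (fun m : M => (m, 0 : N)).
  by move=> a x y; rewrite -pair_scaleE -pair_addE scaler0 addr0.
have im_g m : fspan g m -> exists x, psi x = (m, 0).
  by move=> hm; apply/psi_G/fspan_catl/fspan_linear.
have im_t y : y \in t -> exists x, psi x = (0, y.2).
  by move=> hy; apply/psi_G/fspan_catr/fspan_mem/(map_f (fun y => (0 : M, y.2))).
have snd_lin : linear (fun x => (psi x).2) by move=> a x y; rewrite psi_lin.
have hz' : tensor_zero (graph_expr f psi t).
  apply: (hvan _ hX _ _ (graph_vertical_submod f psi_lin)
    (fun q => graph_vertical_meet f_inj psi_lin psi_inj (q := q))).
  by case; [exact: (graph_expr_in_graph psi_lin t_g im_g im_t)
            |exact: (graph_expr_in_vertical psi_lin psi_inj t_g tg0 im_g im_t)].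
by have := tensor_eq_tmap snd_lin hz'; rewrite (tmap_graph_expr psi_lin t_g im_g im_t).
Qed.

Unset Implicit Arguments.

Theorem proposition5p6 (R : comPzRingType) (S : lmodType R) :
  [<-> intersection_flat S;
       forall (M : lmodType R), fin_gen M ->
         forall (L : Type) (Ml : L -> M -> Prop),
           (forall l, is_submodule (Ml l)) -> prop_sharp S Ml;
       forall (M : lmodType R), fin_gen_free M ->
         forall (L : Type) (Ml : L -> M -> Prop),
           (forall l, is_submodule (Ml l)) -> prop_sharp S Ml;
       forall (M : lmodType R), fin_gen M ->
         forall (L : Type) (Ml : L -> M -> Prop),
           (forall l, is_submodule (Ml l)) ->
           (forall m : M, (forall l, Ml l m) -> m = 0) ->
           forall t : tensor_expr S M,
             (forall l, in_tensor_image (Ml l) t) -> tensor_zero t].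
Proof.
tfae.
- by case.
- by move=> hsharp M /fin_gen_free_fin_gen; apply: hsharp.
- exact: vanishing_of_sharp_free.
- by move=> hvan; split; [apply: flat_of_vanishing|apply: sharp_of_vanishing].
Qed.
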